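(* Let $R$ be a semistandard cylindric tableau and $S$ a set of boxes satisfying the input conditions of full multi-insertion, and perform $\operatorname{FullMulti}(R,S)$. Then for every row $r$, the list of entries removed from row $r$ (either removed from boxes of $S$ in the initial phase, or displaced by a bump), in the order in which they were removed, is weakly increasing.
   Context: Fix integers $n>k\ge1$. A cylindric partition is a weakly decreasing integer sequence $(\lambda_m)_{m\in\mathbb Z}$ with $\lambda_m=\lambda_{m+k}+n-k$. A point $(x,y)\in\mathbb Z^2$ lies in $\lambda$ if $y\le\lambda_x$. Boxes are classes of points modulo translation by multiples of $(-k,n-k)$; row $x$ of the cylinder is the image of plane row $x$ (indexed mod $k$), column $y$ the image of plane column $y$; within a row boxes are ordered left to right by $y$-coordinates of representatives in a fixed plane row. $\mu\subseteq\lambda$ means $\mu_m\le\lambda_m$ for all $m$. A (semistandard cylindric) tableau of shape $\lambda/\mu$ is a map from the boxes in $\lambda$ but not $\mu$ to a totally ordered alphabet, weakly increasing along plane rows and strictly increasing down plane columns; its shapes are part of its data. Full multi-insertion $\operatorname{FullMulti}(R,S)$: input a tableau $R$ with outer shape $\lambda$, inner shape $\mu$, and a set $S$ of boxes not in $\mu$, no two in the same column, such that $\mu$ plus $S$ is a cylindric partition. Choose an integer $r_0$. For $h=r_0,\dots,r_0+k-1$, go through the boxes of $S$ in row $h$ from left to right: if the box is in $\lambda$, remove its entry $x$ and append $(x,h+1)$ to a queue; otherwise add the box to $\lambda$. All boxes of $S$ are added to the inner shape. Then, while the current queue $q$ is nonempty: start an empty queue $q'$; remove pairs $(x,s)$ from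 the front of $q$ one at a time; if $x$ is $\ge$ every entry in row $s$, put $x$ into the leftmost box of row $s$ not in the current outer shape and add it to the outer shape; otherwise replace the leftmost entry $x'$ of row $s$ greater than $x$ by $x$ (a bump displacing $x'$) and append $(x',s+1)$ to $q'$; when $q$ is exhausted set $q:=q'$. All actions are performed one at a time, giving a time order. *)

From HB Require Import structures.
From mathcomp Require Import all_boot all_order all_algebra.
Set Implicit Arguments. Unset Strict Implicit. Unset Printing Implicit Defensive.
Import Order.TTheory GRing.Theory Num.Theory.
Local Open Scope ring_scope.

Section Cylindric.
Variables (n k : nat).

Definition cylindric (lam : int -> int) : Prop :=
  (forall m : int, lam (m + 1) <= lam m) /\
  (forall m : int, lam m = lam (m + k%:Z) + (n%:Z - k%:Z)).

Definition in_shape (lam : int -> int) (x y : int) : bool := y <= lam x.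

Definition in_skew (lam mu : int -> int) (x y : int) : bool :=
  in_shape lam x y && ~~ in_shape mu x y.

Definition contained (mu lam : int -> int) : Prop := forall m : int, mu m <= lam m.

(* (x1,y1) and (x2,y2) represent the same box: they differ by a multiple
   of (-k, n-k). *)
Definition same_box (x1 y1 x2 y2 : int) : bool :=
  (k%:Z %| (x2 - x1))%Z &&
  (y1 - y2 == ((x2 - x1) %/ k%:Z)%Z * (n%:Z - k%:Z)).

(* points in plane row x equal to row x' of the cylinder *)
Definition same_row (x x' : int) : bool := (k%:Z %| (x - x'))%Z.

Variables (d : Order.disp_t) (T : orderType d).

(* A semistandard cylindric tableau of shape lam/mu, with entries given on
   plane points (ent x y = entry of the box of (x,y)); values outside the
   skew shape are irrelevant. *)
Definition is_tableau (lam mu : int -> int) (ent : int -> int -> T) : Prop :=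
  [/\ cylindric lam /\ cylindric mu, contained mu lam,
      (forall x y : int, in_skew lam mu x y ->
          ent x y = ent (x - k%:Z) (y + (n%:Z - k%:Z))),
      (forall x y : int, in_skew lam mu x y -> in_skew lam mu x (y + 1) ->
          (ent x y <= ent x (y + 1))%O) &
      (forall x y : int, in_skew lam mu x y -> in_skew lam mu (x + 1) y ->
          (ent x y < ent (x + 1) y)%O)].

(* State of the algorithm: outer shape, inner shape, entries, current queue q,
   next queue q', and the log of removals (row, removed entry) in time order. *)
Record state := State {
  st_lam : int -> int;
  st_mu : int -> int;
  st_ent : int -> int -> T;
  st_q : seq (T * int);
  st_q' : seq (T * int);
  st_log : seq (int * T) }.

Definition row_ys (lam mu : int -> int) (s : int) : seq int :=
  if mu s <= lam s then [seq mu s + (j.+1)%:Z | j <- iota 0 `|lam s - mu s|%N]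
  else [::].

(* Initial phase: S = nu/mu.  For h = r0, ..., r0+k-1 and the boxes of S in
   row h from left to right, those lying in lam have their entry removed
   (list of (entry, h)); the others are added to lam. *)
Definition phase1_removed (lam mu nu : int -> int) (ent : int -> int -> T)
    (r0 : int) : seq (T * int) :=
  flatten [seq [seq (ent h y, h) | y <- row_ys nu mu h & y <= lam h]
          | h <- [seq r0 + i%:Z | i <- iota 0 k]].

Definition init_state (lam mu nu : int -> int) (ent : int -> int -> T)
    (r0 : int) : state :=
  let rm := phase1_removed lam mu nu ent r0 in
  State (fun m => Num.max (lam m) (nu m)) nu ent
        [seq (p.1, p.2 + 1) | p <- rm] [::] [seq (p.2, p.1) | p <- rm].

Definition step (st : state) : state :=
  let: State lam mu ent q q' log := st in
  match q with
  | (x, s) :: qr =>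
      let ys := row_ys lam mu s in
      if all (fun y => (ent s y <= x)%O) ys then
        let y0 := lam s + 1 in
        State (fun m => if same_row m s then lam m + 1 else lam m) mu
              (fun a b => if same_box a b s y0 then x else ent a b)
              qr q' log
      else
        let y := nth 0 ys (find (fun y => (x < ent s y)%O) ys) in
        let x' := ent s y in
        State lam mu (fun a b => if same_box a b s y then x else ent a b)
              qr (rcons q' (x', s + 1)) (rcons log (s, x'))
  | [::] => if q' is _ :: _ then State lam mu ent q' [::] log else st
  end.

Definition fullmulti_log (lam mu nu : int -> int) (ent : int -> int -> T)
    (r0 : int) (N : nat) : seq (int * T) :=
  st_log (iter N step (init_state lam mu nu ent r0)).

Definition removed_from_row (log : seq (int * T)) (r : int) : seq T :=
  [seq e.2 | e <- log & same_row e.1 r].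

End Cylindric.

From HB Require Import structures.
From mathcomp Require Import all_boot all_order all_algebra zify.
Set Implicit Arguments. Unset Strict Implicit. Unset Printing Implicit Defensive.
Import Order.TTheory GRing.Theory Num.Theory.
Local Open Scope ring_scope.

(* At every moment of the algorithm each plane row [s] is cut by a frontier [c s]:
   the boxes left of it hold entries placed by the algorithm, the boxes right of it
   still hold the entries of [R].  New entries are bounded by the pending values
   headed for their row and by the old entries of the row above; removed entries
   and pending values headed for a row are bounded by the old entries of that row.
   An insertion moves the frontier to the end of the row, a bump moves it onto the
   bumped box.  A bumped entry is therefore an old entry, hence at least every
   entry removed from its row before, so each row's removal log stays sorted. *)

Section Periodicity.
Variables (n k : nat).
Local Notation K := k%:Z.
Local Notation w := (n%:Z - k%:Z).

Definition cyl_periodic (f : int -> int) := forall m, f m = f (m + K) + w.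

Lemma cylindric_periodic f : cylindric n k f -> cyl_periodic f.
Proof. by case. Qed.

Lemma cyl_periodic_shift f m m' (j : int) :
  cyl_periodic f -> m' = m + j * K -> f m' = f m - j * w.
Proof.
move=> pf ->; have natE (i : nat) p : f (p + i%:Z * K) = f p - i%:Z * w.
  elim: i p => [|i IH] p; first by rewrite mul0r addr0; lia.
  have -> : p + i.+1%:Z * K = p + i%:Z * K + K by lia.
  have := pf (p + i%:Z * K); rewrite IH; set X := f (_ + K); lia.
case: j => j; first exact: natE.
have := natE j.+1 (m + Negz j * K).
have -> : m + Negz j * K + j.+1%:Z * K = m by lia.
lia.
Qed.

Lemma same_rowE a s : same_row k a s <-> exists j, a = s + j * K.
Proof.
split; first by move/dvdzP=> [j hj]; exists j; lia.
by move=> [j hj]; apply/dvdzP; exists j; lia.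
Qed.

Lemma same_row_refl a : same_row k a a.
Proof. by apply/same_rowE; exists 0; lia. Qed.

Lemma same_row_sym a b : same_row k a b -> same_row k b a.
Proof. by move/same_rowE=> [j hj]; apply/same_rowE; exists (- j); lia. Qed.

Lemma same_row_trans a b c : same_row k a b -> same_row k b c -> same_row k a c.
Proof.
move/same_rowE=> [j hj] /same_rowE [j' hj']; apply/same_rowE; exists (j + j'); lia.
Qed.

Lemma same_rowD a b t : same_row k (a + t) (b + t) = same_row k a b.
Proof. by apply/idP/idP => /same_rowE [j hj]; apply/same_rowE; exists j; lia. Qed.

Lemma same_rowDK a b : same_row k (a + K) b = same_row k a b.
Proof.
by apply/idP/idP => /same_rowE [j hj]; apply/same_rowE; [exists (j - 1) | exists (j + 1)]; lia.
Qed.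

Lemma same_box_row m s j b y0 : (0 < k)%N ->
  m = s + j * K -> same_box n k m b s y0 = (b == y0 - j * w).
Proof.
move=> k_gt0 hm; rewrite /same_box.
have -> : s - m = (- j) * K by lia.
rewrite dvdz_mull ?dvdzz // mulzK; last lia.
by apply/eqP/eqP; lia.
Qed.

Lemma same_box_other_row m b s y0 : ~~ same_row k m s -> same_box n k m b s y0 = false.
Proof.
move=> hms; apply/negP => /andP [/dvdzP [j hj] _]; move/negP: hms; apply.
by apply/same_rowE; exists (- j); lia.
Qed.

Lemma same_box_shift a b s y0 : (0 < k)%N ->
  same_box n k (a - K) (b + w) s y0 = same_box n k a b s y0.
Proof.
move=> k_gt0; case: (boolP (same_row k a s)) => [/same_rowE [j hj] | hr].
  have hj' : a - K = s + (j - 1) * K by lia.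
  by rewrite (same_box_row _ _ k_gt0 hj) (same_box_row _ _ k_gt0 hj'); apply/eqP/eqP; lia.
rewrite !same_box_other_row //; apply: contra hr.
by rewrite -(same_rowDK (a - K)) subrK.
Qed.

Section Skew.
Variables (L M : int -> int).
Hypotheses (pL : cyl_periodic L) (pM : cyl_periodic M).

Lemma in_skew_shift x y x' y' j : x' = x + j * K -> y' = y - j * w ->
  in_skew L M x' y' = in_skew L M x y.
Proof.
move=> hx hy; rewrite /in_skew /in_shape.
by rewrite (cyl_periodic_shift pL hx) (cyl_periodic_shift pM hx) hy !lerD2r.
Qed.

Variables (d : Order.disp_t) (T : orderType d) (e : int -> int -> T).
Hypothesis pe : forall x y, in_skew L M x y -> e x y = e (x - K) (y + w).

Lemma skew_entry_shift x y x' y' j : in_skew L M x y ->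
  x' = x + j * K -> y' = y - j * w -> e x' y' = e x y.
Proof.
have natE (i : nat) p q : in_skew L M p q -> e p q = e (p - i%:Z * K) (q + i%:Z * w).
  elim: i p q => [|i IH] p q h; first by rewrite !mul0r subr0 addr0.
  rewrite IH // pe; last by rewrite (@in_skew_shift p q _ _ (- i%:Z)) //; lia.
  by congr e; lia.
move=> h hx hy; case: j hx hy => j hx hy.
  have h' : in_skew L M x' y' by rewrite (in_skew_shift hx hy).
  by rewrite (natE j x' y' h'); congr e; lia.
by rewrite (natE j.+1 x y h); congr e; lia.
Qed.

End Skew.
End Periodicity.

Arguments same_box_row {n k m s j b y0}.

Lemma mem_row_ys (L M : int -> int) s y : (y \in row_ys L M s) = (M s < y <= L s).
Proof.
rewrite /row_ys; case: ifP => h; last by rewrite in_nil; apply/esym/negP; lia.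
apply/mapP/idP => [[j hj ->] | hy]; first by move: hj; rewrite mem_iota; lia.
by exists (absz (y - M s - 1)%R); [rewrite mem_iota|]; lia.
Qed.

Lemma row_ys_sorted (L M : int -> int) s : sorted <=%R (row_ys L M s).
Proof.
rewrite /row_ys; case: ifP => // _; rewrite sorted_map.
by apply: sub_sorted (iota_sorted _ _) => a b /=; lia.
Qed.

Lemma row_ys_find (L M : int -> int) s (P : pred int) : has P (row_ys L M s) ->
  let yb := nth 0 (row_ys L M s) (find P (row_ys L M s)) in
  [/\ M s < yb <= L s, P yb & forall y, M s < y < yb -> ~~ P y].
Proof.
set ys := row_ys L M s => hP yb.
have hi : (find P ys < size ys)%N by rewrite -has_find.
have hML : M s <= L s by move: hi; rewrite /ys /row_ys; case: ifP.
have size_ys : size ys = absz (L s - M s)%R by rewrite /ys /row_ys hML size_map size_iota.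
have nth_ys i : (i < size ys)%N -> nth 0 ys i = M s + i.+1%:Z.
  by rewrite size_ys => hi'; rewrite /ys /row_ys hML (nth_map 0%N) ?size_iota // nth_iota.
split; [by rewrite -mem_row_ys mem_nth | exact: nth_find |].
move=> y; rewrite /yb nth_ys // => hy.
have hj : (absz (y - M s - 1)%R < find P ys)%N by lia.
have := before_find 0 hj; rewrite nth_ys; last exact: ltn_trans hj hi.
have -> : M s + (absz (y - M s - 1)%R).+1%:Z = y by lia.
by move=> ->.
Qed.

Lemma sorted_rcons (A : eqType) (r : rel A) (l : seq A) (a : A) :
  sorted r l -> (forall z, z \in l -> r z a) -> sorted r (rcons l a).
Proof.
case: l => //= b l hs hle; rewrite rcons_path hs; apply: hle; exact: mem_last.
Qed.

Lemma sorted_flatten_one_block (A : Type) (leT : rel A) (I : eqType) (W : seq I)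
    (g : I -> seq A) :
  uniq W -> {in W &, forall i j, ~~ nilp (g i) -> ~~ nilp (g j) -> i = j} ->
  (forall i, sorted leT (g i)) -> sorted leT (flatten (map g W)).
Proof.
elim: W => //= i W IH /andP [iW uW] one sg.
case: (boolP (nilp (g i))) => [/nilP -> | gi].
  by apply: IH => // a b aW bW; apply: one; rewrite inE ?aW ?bW orbT.
have nilW j : j \in W -> g j = [::].
  move=> jW; apply/nilP/negPn/negP => gj; move: iW.
  by rewrite (one i j) ?jW ?mem_head ?inE ?jW ?orbT.
suff -> : flatten (map g W) = [::] by rewrite cats0.
by rewrite (eq_in_map _ (fun=> [::]) W).1 //; elim: (W).
Qed.

Lemma tableau_row_mono n k (d : Order.disp_t) (T : orderType d) lam mu (ent : int -> int -> T) :
  is_tableau n k lam mu ent ->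
  forall x y1 y2, mu x < y1 <= y2 -> y2 <= lam x -> (ent x y1 <= ent x y2)%O.
Proof.
case=> _ _ _ row _ x y1 y2 hy hy2.
have -> : y2 = y1 + (absz (y2 - y1)%R)%:Z by lia.
have : y1 + (absz (y2 - y1)%R)%:Z <= lam x by lia.
elim: (absz _) => [|i IH] hi; first by rewrite addr0.
apply: le_trans (IH _) _; first lia.
have -> : y1 + i.+1%:Z = y1 + i%:Z + 1 by lia.
by apply: row; rewrite /in_skew /in_shape; apply/andP; split; lia.
Qed.

Lemma same_row_window k (r0 : int) (i1 i2 : nat) : (i1 < k)%N -> (i2 < k)%N ->
  same_row k (r0 + i1%:Z) (r0 + i2%:Z) -> i1 = i2.
Proof.
move=> hi1 hi2 /dvdzP [j hj].
have [jlt|jgt|j0] := ltgtP j 0; last by lia.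
  have : j * k%:Z <= - k%:Z by nia.
  lia.
have : j * k%:Z >= k%:Z by nia.
lia.
Qed.

Section FullMultiInsertion.
Variables (n k : nat) (d : Order.disp_t) (T : orderType d).
Variables (lam0 mu0 nu : int -> int) (ent0 : int -> int -> T).
Hypotheses (k_gt0 : (0 < k)%N) (tab : is_tableau n k lam0 mu0 ent0).
Hypotheses (cyl_nu : cylindric n k nu) (mu0_nu : contained mu0 nu).
Local Notation K := k%:Z.
Local Notation w := (n%:Z - k%:Z).

Let lam0_periodic : cyl_periodic n k lam0. Proof. by case: tab => [[/cylindric_periodic]]. Qed.
Let mu0_periodic : cyl_periodic n k mu0. Proof. by case: tab => [[_ /cylindric_periodic]]. Qed.
Let nu_periodic : cyl_periodic n k nu. Proof. exact: cylindric_periodic. Qed.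
Let ent0_periodic x y : in_skew lam0 mu0 x y -> ent0 x y = ent0 (x - K) (y + w).
Proof. by case: tab => _ _ /(_ x y). Qed.

(* [L], [E] are the current outer shape and entries, [P] the pending pairs
   (entry, row it goes to) of [q ++ q'], and [c] the frontier: in plane row [s]
   the boxes [nu s < y <= c s] hold new entries, the boxes [c s < y <= L s]
   still hold their entries from [R]. *)
Record frontier_invariant (L : int -> int) (E : int -> int -> T) (P : seq (T * int))
    (log : seq (int * T)) (c : int -> int) : Prop := FrontierInvariant {
  lam_periodic : cyl_periodic n k L;
  ent_periodic : forall x y, in_skew L nu x y -> E x y = E (x - K) (y + w);
  front_bounds : forall s, nu s <= c s <= L s;
  new_le_pending : forall s y p, nu s < y <= c s -> p \in P -> same_row k p.2 s ->
    (E s y <= p.1)%O;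
  new_le_old_above : forall s y y', nu s < y <= c s -> c (s - 1) < y' <= L (s - 1) ->
    (E s y <= ent0 (s - 1) y')%O;
  old_entries : forall s y, c s < y <= L s -> y <= lam0 s /\ E s y = ent0 s y;
  removed_le_old : forall s e y, e \in log -> same_row k e.1 s -> c s < y <= L s ->
    (e.2 <= ent0 s y)%O;
  pending_le_old_above : forall s p y, p \in P -> same_row k p.2 (s + 1) ->
    c s < y <= L s -> (p.1 <= ent0 s y)%O;
  removed_sorted : forall r, sorted <=%O (removed_from_row k log r);
  pending_sorted : forall r, sorted <=%O [seq p.1 | p <- P & same_row k p.2 r] }.

Definition good_state (st : state T) : Prop :=
  st_mu st = nu /\
  exists c, frontier_invariant (st_lam st) (st_ent st) (st_q st ++ st_q' st) (st_log st) c.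

Section InitialPhase.
Variable r0 : int.
Local Notation removed := (phase1_removed k lam0 mu0 nu ent0 r0).

Lemma mem_phase1_removed p : p \in removed ->
  exists h y, p = (ent0 h y, h) /\ mu0 h < y <= nu h /\ y <= lam0 h.
Proof.
move=> /flattenP [l /mapP [h _ ->]] /mapP [y]; rewrite mem_filter mem_row_ys.
by move=> /andP [h1 h2] ->; exists h, y.
Qed.

Lemma phase1_removed_le_old p s y : p \in removed -> same_row k p.2 s ->
  nu s < y <= lam0 s -> (p.1 <= ent0 s y)%O.
Proof.
move=> /mem_phase1_removed [h [y1 [pE [hy1 hy1']]]]; rewrite pE /= => /same_rowE [j hj] hy.
have hsk : in_skew lam0 mu0 s y.
  by rewrite /in_skew /in_shape; have := mu0_nu s; lia.
rewrite -(skew_entry_shift lam0_periodic mu0_periodic ent0_periodic hsk hj (erefl (y - j * w))).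
have := cyl_periodic_shift nu_periodic hj.
have := cyl_periodic_shift lam0_periodic hj.
by move=> e1 e2; apply: (tableau_row_mono tab); lia.
Qed.

Lemma filter_row_map (ys : seq int) h r :
  [seq p.1 | p <- [seq (ent0 h y, h) | y <- ys] & same_row k p.2 r] =
  if same_row k h r then [seq ent0 h y | y <- ys] else [::].
Proof. by elim: ys => [|y ys IH] /=; case: ifP => hr //=; rewrite IH hr. Qed.

Lemma phase1_removed_sorted r :
  sorted <=%O [seq p.1 | p <- removed & same_row k p.2 r].
Proof.
pose block i := let h := r0 + i%:Z in
  if same_row k h r then [seq ent0 h y | y <- row_ys nu mu0 h & y <= lam0 h] else [::].
have -> : [seq p.1 | p <- removed & same_row k p.2 r] = flatten (map block (iota 0 k)).
  by rewrite filter_flatten map_flatten -!map_comp; congr flatten; apply: eq_map => i /=;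
    rewrite filter_row_map.
apply: sorted_flatten_one_block; first exact: iota_uniq.
  move=> i1 i2; rewrite !mem_iota !add0n /= /block => hi1 hi2.
  case: ifP => // h1 _; case: ifP => // h2 _.
  exact: (same_row_window hi1 hi2 (same_row_trans h1 (same_row_sym h2))).
move=> i; rewrite /block; case: ifP => // _; rewrite sorted_map.
apply: (@sub_in_sorted _ (fun y => mu0 (r0 + i%:Z) < y <= lam0 (r0 + i%:Z)) <=%R).
- by move=> y1 y2; rewrite !unfold_in /= => hy1 hy2 hy; apply: (tableau_row_mono tab); lia.
- by apply/allP => y; rewrite mem_filter mem_row_ys; have := mu0_nu (r0 + i%:Z); lia.
- by apply: sorted_filter; [exact: le_trans | exact: row_ys_sorted].
Qed.

Lemma init_good_state : good_state (init_state k lam0 mu0 nu ent0 r0).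
Proof.
split=> //; exists nu; rewrite /init_state /= cats0; constructor => //=.
- by move=> m; have := lam0_periodic m; have := nu_periodic m; lia.
- move=> x y; rewrite /in_skew /in_shape => /andP [h1 h2]; apply: ent0_periodic.
  by rewrite /in_skew /in_shape; have := mu0_nu x; lia.
- by move=> s; lia.
- by move=> s y p; lia.
- by move=> s y y'; lia.
- by move=> s y hy; split=> //; lia.
- by move=> s e y /mapP [p hp ->] /= hs hy; apply: phase1_removed_le_old => //; lia.
- move=> s p y /mapP [p0 hp0 ->] /= hs hy.
  by apply: phase1_removed_le_old => //; [rewrite -(same_rowD k _ _ 1) | lia].
- by move=> r; rewrite /removed_from_row filter_map -map_comp; apply: phase1_removed_sorted.
move=> r; rewrite filter_map -map_comp.
rewrite (eq_filter (a2 := fun p => same_row k p.2 (r - 1))); first exact: phase1_removed_sorted.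
by move=> p /=; rewrite -[RHS](same_rowD k _ _ 1) subrK.
Qed.

End InitialPhase.

Section Step.
Variables (L : int -> int) (E : int -> int -> T) (x : T) (s : int).
Variables (P : seq (T * int)) (log : seq (int * T)) (c : int -> int).
Hypothesis inv : frontier_invariant L E ((x, s) :: P) log c.

Let L_periodic : cyl_periodic n k L := lam_periodic inv.

Lemma head_le_pending p : p \in P -> same_row k p.2 s -> (x <= p.1)%O.
Proof.
move=> hp hps; have := pending_sorted inv s.
rewrite /= same_row_refl /= path_sortedE; last exact: le_trans.
by case/andP => /allP hall _; apply: hall; apply/mapP; exists p; rewrite ?mem_filter ?hps.
Qed.

Lemma pending_tail_sorted r : sorted <=%O [seq p.1 | p <- P & same_row k p.2 r].
Proof. by have := pending_sorted inv r => /=; case: ifP => // _ /path_sorted. Qed.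

Lemma ent_in_row_class m j y : m = s + j * K -> nu m < y <= L m -> E m y = E s (y + j * w).
Proof.
move=> hj hy; have e1 := cyl_periodic_shift L_periodic hj.
have e2 := cyl_periodic_shift nu_periodic hj.
have hsk : in_skew L nu s (y + j * w) by rewrite /in_skew /in_shape; lia.
by apply: (skew_entry_shift L_periodic nu_periodic (ent_periodic inv) hsk hj); lia.
Qed.

Section Insert.
Hypothesis x_ge_row : forall y, nu s < y <= L s -> (E s y <= x)%O.
Let L' m := if same_row k m s then L m + 1 else L m.
Let E' a b := if same_box n k a b s (L s + 1) then x else E a b.
Let c' m := if same_row k m s then L m + 1 else c m.

Lemma insert_row_le_x m y : same_row k m s -> nu m < y <= L m + 1 -> (E' m y <= x)%O.
Proof.
move=> /same_rowE [j hj] hy; rewrite /E' (same_box_row k_gt0 hj).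
have e1 := cyl_periodic_shift L_periodic hj; have e2 := cyl_periodic_shift nu_periodic hj.
case: eqP => [_ | hne]; first exact: lexx.
by rewrite (ent_in_row_class hj); [apply: x_ge_row |]; lia.
Qed.

Lemma insert_old_region r y : c' r < y <= L' r -> c r < y <= L r /\ ~~ same_row k r s.
Proof. by rewrite /c' /L'; case: ifP => hr; [lia | split]. Qed.

Lemma insert_invariant : frontier_invariant L' E' P log c'.
Proof.
have E'_other m y : ~~ same_row k m s -> E' m y = E m y.
  by move=> hm; rewrite /E' same_box_other_row.
constructor.
- by move=> m; rewrite /L' same_rowDK; have := L_periodic m; case: ifP => _; lia.
- move=> x0 y0; rewrite /E' same_box_shift //; case: ifP => // hb hsk.
  apply: (ent_periodic inv); move: hsk hb; rewrite /in_skew /in_shape /L'.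
  case: (boolP (same_row k x0 s)) => [/same_rowE [j hj] | _] //.
  rewrite (same_box_row k_gt0 hj) (cyl_periodic_shift L_periodic hj); lia.
- by move=> m; have := front_bounds inv m; rewrite /c' /L'; case: ifP => _; lia.
- move=> m y p; case: (boolP (same_row k m s)) => hm hy hp hpm.
    apply: le_trans (insert_row_le_x hm _) (head_le_pending hp (same_row_trans hpm hm)).
    by move: hy; rewrite /c' hm.
  rewrite E'_other //; apply: (new_le_pending inv) _ _ hpm; last by rewrite inE hp orbT.
  by move: hy; rewrite /c' (negbTE hm).
- move=> m y y'; case: (boolP (same_row k m s)) => hm hy /insert_old_region [hy' _].
    apply: le_trans (insert_row_le_x hm _) _; first by move: hy; rewrite /c' hm.
    apply: (pending_le_old_above inv (p := (x, s)) (mem_head _ _) _ hy').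
    by rewrite /= subrK same_row_sym.
  by rewrite E'_other //; apply: (new_le_old_above inv) hy'; move: hy; rewrite /c' (negbTE hm).
- by move=> m y /insert_old_region [hy hm]; rewrite E'_other //; apply: (old_entries inv).
- by move=> m e y he hem /insert_old_region [hy _]; apply: (removed_le_old inv) he hem hy.
- move=> m p y hp hpm /insert_old_region [hy _].
  by apply: (pending_le_old_above inv) hpm hy; rewrite inE hp orbT.
- exact: removed_sorted inv.
exact: pending_tail_sorted.
Qed.

End Insert.

Section Bump.
Variable yb : int.
Hypotheses (yb_in_row : nu s < yb <= L s) (x_lt_bumped : (x < E s yb)%O).
Hypothesis x_ge_before : forall y, nu s < y < yb -> (E s y <= x)%O.
Let E' a b := if same_box n k a b s yb then x else E a b.
(* in every plane row of the class of [s] the frontier moves onto the bumped box *)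
Let c' m := if same_row k m s then nu m + (yb - nu s) else c m.

Lemma bumped_in_class m j : m = s + j * K ->
  nu m < yb - j * w <= L m /\ E m (yb - j * w) = E s yb.
Proof.
move=> hj; have e1 := cyl_periodic_shift L_periodic hj.
have e2 := cyl_periodic_shift nu_periodic hj.
by split; [lia | rewrite (ent_in_row_class hj); [congr E | ]; lia].
Qed.

Lemma front_lt_bumped m j : m = s + j * K -> c m < yb - j * w.
Proof.
move=> hj; have [hyb hE] := bumped_in_class hj; rewrite ltNge; apply/negP => hle.
have hms : same_row k s m by apply/same_rowE; exists (- j); lia.
have := new_le_pending inv (p := (x, s)) (s := m) (y := yb - j * w) (ltac:(lia)) (mem_head _ _) hms.
by rewrite /= hE leNgt x_lt_bumped.
Qed.

Lemma bumped_old m j : m = s + j * K ->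
  yb - j * w <= lam0 m /\ E s yb = ent0 m (yb - j * w).
Proof.
move=> hj; have [hyb <-] := bumped_in_class hj.
by apply: (old_entries inv); have := front_lt_bumped hj; lia.
Qed.

Lemma bump_front_row m j : m = s + j * K -> c' m = yb - j * w.
Proof.
move=> hj; have hm : same_row k m s by apply/same_rowE; exists j.
by rewrite /c' hm (cyl_periodic_shift nu_periodic hj); lia.
Qed.

Lemma bump_old_region r y : c' r < y <= L r -> c r < y <= L r.
Proof.
rewrite /c'; case: ifP => // /same_rowE [j hj].
by have := front_lt_bumped hj; have := cyl_periodic_shift nu_periodic hj; lia.
Qed.

Lemma bump_keeps_old m y : c' m < y -> E' m y = E m y.
Proof.
rewrite /E'; case: (boolP (same_row k m s)) => [/same_rowE [j hj] | hm]; last first.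
  by rewrite same_box_other_row.
by rewrite (bump_front_row hj) (same_box_row k_gt0 hj); case: eqP => //; lia.
Qed.

Lemma bump_new_le_x m y : same_row k m s -> nu m < y <= c' m -> (E' m y <= x)%O.
Proof.
move=> /same_rowE [j hj]; rewrite (bump_front_row hj) /E' (same_box_row k_gt0 hj) => hy.
case: eqP => [_ | hne]; first exact: lexx.
have e2 := cyl_periodic_shift nu_periodic hj.
have [hyb _] := bumped_in_class hj.
by rewrite (ent_in_row_class hj); [apply: x_ge_before | ]; lia.
Qed.

Lemma bumped_le_old m y : same_row k m s -> c' m < y <= L m -> (E s yb <= ent0 m y)%O.
Proof.
move=> /same_rowE [j hj]; rewrite (bump_front_row hj) => hy.
have [hyb hold] := bumped_old hj; have := front_lt_bumped hj => hc.
have [hyl _] := old_entries inv (s := m) (y := y) (ltac:(lia)).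
rewrite hold; apply: (tableau_row_mono tab); last lia.
by have := mu0_nu m; have [+ _] := bumped_in_class hj; lia.
Qed.

Lemma bumped_old_in_row : [/\ c s < yb, yb <= lam0 s & E s yb = ent0 s yb].
Proof.
have hs : s = s + 0 * K by rewrite mul0r addr0.
by have := front_lt_bumped hs; have [] := bumped_old hs; rewrite mul0r subr0.
Qed.

Lemma bump_other_row m y : ~~ same_row k m s -> E' m y = E m y.
Proof. by move=> hm; rewrite /E' same_box_other_row. Qed.

Lemma bump_new_le_pending m y p : nu m < y <= c' m ->
  p \in rcons P (E s yb, s + 1) -> same_row k p.2 m -> (E' m y <= p.1)%O.
Proof.
rewrite mem_rcons inE => hy hp hpm; case: (boolP (same_row k m s)) => hm.
  apply: le_trans (bump_new_le_x hm hy) _.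
  case/orP: hp => [/eqP -> | hp]; first exact: ltW.
  exact: head_le_pending hp (same_row_trans hpm hm).
move: hy; rewrite bump_other_row // /c' (negbTE hm) => hy.
case/orP: hp => [/eqP hp | hp]; last first.
  by apply: (new_le_pending inv) hy _ hpm; rewrite inE hp orbT.
move: hpm; rewrite hp /= => /same_row_sym /same_rowE [j hj].
have hj' : m - 1 = s + j * K by lia.
have [hyb _] := bumped_in_class hj'; have [_ ->] := bumped_old hj'.
by apply: (new_le_old_above inv) hy _; have := front_lt_bumped hj'; lia.
Qed.

Lemma bump_removed_sorted r : sorted <=%O (removed_from_row k (rcons log (s, E s yb)) r).
Proof.
have [hc hyb hold] := bumped_old_in_row.
rewrite /removed_from_row filter_rcons /=; case: ifP => hsr; last exact: removed_sorted inv r.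
rewrite map_rcons; apply: sorted_rcons (removed_sorted inv r) _ => z /mapP [e].
rewrite mem_filter => /andP [her he] ->; rewrite hold.
by apply: (removed_le_old inv) he (same_row_trans her (same_row_sym hsr)) _; lia.
Qed.

Lemma bump_pending_sorted r :
  sorted <=%O [seq p.1 | p <- rcons P (E s yb, s + 1) & same_row k p.2 r].
Proof.
have [hc hyb hold] := bumped_old_in_row.
rewrite filter_rcons /=; case: ifP => hsr; last exact: pending_tail_sorted.
rewrite map_rcons; apply: sorted_rcons (pending_tail_sorted r) _ => z /mapP [p].
rewrite mem_filter => /andP [hpr hp] ->; rewrite hold.
apply: (pending_le_old_above inv) (same_row_trans hpr (same_row_sym hsr)) _; last lia.
by rewrite inE hp orbT.
Qed.

Lemma bump_invariant :
  frontier_invariant L E' (rcons P (E s yb, s + 1)) (rcons log (s, E s yb)) c'.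
Proof.
constructor.
- exact: L_periodic.
- move=> x0 y0 hsk; rewrite /E' same_box_shift //.
  by case: ifP => // _; apply: (ent_periodic inv).
- move=> m; rewrite /c'; case: (boolP (same_row k m s)) => [/same_rowE [j hj] | _].
    have e2 := cyl_periodic_shift nu_periodic hj; have [+ _] := bumped_in_class hj; lia.
  exact: front_bounds inv m.
- exact: bump_new_le_pending.
- move=> m y y' hy /bump_old_region hy'.
  case: (boolP (same_row k m s)) => hm.
    apply: le_trans (bump_new_le_x hm hy) _.
    apply: (pending_le_old_above inv (p := (x, s)) (mem_head _ _) _ hy').
    by rewrite /= subrK same_row_sym.
  move: hy; rewrite bump_other_row // /c' (negbTE hm) => hy.
  exact: (new_le_old_above inv) hy hy'.
- move=> m y hy; rewrite bump_keeps_old; last lia.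
  by apply: (old_entries inv); apply: bump_old_region.
- move=> m e y; rewrite mem_rcons inE => /orP [/eqP -> /= hsm | he hem] hy.
    exact: bumped_le_old (same_row_sym hsm) hy.
  exact: (removed_le_old inv) he hem (bump_old_region hy).
- move=> m p y; rewrite mem_rcons inE => /orP [/eqP -> /= | hp] hpm hy.
    by apply: bumped_le_old hy; rewrite -(same_rowD k _ _ 1); apply: same_row_sym.
  by apply: (pending_le_old_above inv) hpm (bump_old_region hy); rewrite inE hp orbT.
- exact: bump_removed_sorted.
exact: bump_pending_sorted.
Qed.

End Bump.
End Step.

Lemma step_good_state st : good_state st -> good_state (step n k st).
Proof.
case: st => L M E [|[x s] P] q' log [/= -> [c inv]].
  by case: q' inv => [|p q'] inv; split=> //; exists c; rewrite //= cats0.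
rewrite /step; case: ifP => [/allP x_ge_row | /negbT not_all]; split=> //; eexists.
  by apply: insert_invariant inv _ => y hy; apply: x_ge_row; rewrite mem_row_ys.
have : has (fun y => (x < E s y)%O) (row_ys L nu s).
  by rewrite -has_predC in not_all; apply: sub_has not_all => y /=; rewrite -ltNge.
move=> /row_ys_find bumped; have [yb_in_row x_lt_bumped x_ge_before] := bumped.
rewrite /= -rcons_cat; apply: (bump_invariant inv yb_in_row x_lt_bumped) => y /x_ge_before.
by rewrite -leNgt.
Qed.

Lemma good_state_iter r0 N :
  good_state (iter N (@step n k d T) (init_state k lam0 mu0 nu ent0 r0)).
Proof.
elim: N => [|N IH]; first exact: init_good_state.
by rewrite iterS; apply: step_good_state.
Qed.

End FullMultiInsertion.

Theorem mainTheorem13 (n k : nat) (d : Order.disp_t) (T : orderType d)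
    (lam mu nu : int -> int) (ent : int -> int -> T) (r0 : int) :
  (1 <= k)%N -> (k < n)%N ->
  is_tableau n k lam mu ent ->
  cylindric n k nu -> contained mu nu ->
  (forall x x' y : int, in_skew nu mu x y -> in_skew nu mu x' y -> x = x') ->
  forall (N : nat) (r : int),
    sorted (fun a b : T => (a <= b)%O)
      (removed_from_row k (fullmulti_log n k lam mu nu ent r0 N) r).
Proof.
move=> k_gt0 _ tab cyl_nu mu_nu _ N r.
have [_ [c inv]] := good_state_iter k_gt0 tab cyl_nu mu_nu r0 N.
exact: removed_sorted inv r.
Qed.
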